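(* Let $\alpha\in(0,1)$ and let $X_1,X_2,Y$ be real-valued random variables on a probability space $(\Omega,\mathcal A,\mathbb Q)$. If $\mathbb E_{\mathbb Q}\,\mathrm S^{\rm E}_{\alpha,\theta}(X_1,Y)\le\mathbb E_{\mathbb Q}\,\mathrm S^{\rm E}_{\alpha,\theta}(X_2,Y)$ for every $\theta\in\mathbb R$, then $X_1$ dominates $X_2$ as an $\alpha$-expectile forecast, i.e. $\mathbb E_{\mathbb Q}\,\mathrm S(X_1,Y)\le\mathbb E_{\mathbb Q}\,\mathrm S(X_2,Y)$ (expectations in $[0,\infty]$) for every $\mathrm S\in\mathcal S^{\rm E}_\alpha$.
   Context: $(t)_+=\max(t,0)$. For a convex $\phi:\mathbb R\to\mathbb R$, $\phi'$ denotes its left-hand derivative. $\mathcal S^{\rm E}_\alpha$ is the class of all scoring functions $\mathrm S(x,y)=|\mathbb 1(y<x)-\alpha|\,(\phi(y)-\phi(x)-\phi'(x)(y-x))$, $x,y\in\mathbb R$, with $\phi$ convex (these are nonnegative). The elementary expectile scoring function is $\mathrm S^{\rm E}_{\alpha,\theta}(x,y)=|\mathbb 1(y<x)-\alpha|\big((y-\theta)_+-(x-\theta)_+-(y-x)\mathbb 1(\theta<x)\big)$, i.e. it equals $(1-\alpha)|y-\theta|$ if $y\le\theta<x$, $\alpha|y-\theta|$ if $x\le\theta<y$, and $0$ otherwise. *)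

From HB Require Import structures.
From mathcomp Require Import all_boot all_order all_algebra.
From mathcomp Require Import all_classical all_reals all_analysis.
Set Implicit Arguments. Unset Strict Implicit. Unset Printing Implicit Defensive.
Import Order.TTheory GRing.Theory Num.Theory.
Import numFieldNormedType.Exports.
Local Open Scope classical_set_scope.
Local Open Scope ring_scope.

Definition convex_fun (R : realType) (phi : R -> R) : Prop :=
  forall (x y t : R), 0 <= t -> t <= 1 ->
    phi (t * x + (1 - t) * y) <= t * phi x + (1 - t) * phi y.

Definition left_deriv (R : realType) (phi : R -> R) (x : R) : R :=
  lim ((fun h : R => (phi x - phi (x - h)) / h) @ 0^'+).

Definition expectile_score (R : realType) (alpha : R) (phi : R -> R)
    (x y : R) : R :=
  `|(y < x)%R%:R - alpha| * (phi y - phi x - left_deriv phi x * (y - x)).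

Definition expectile_scores (R : realType) (alpha : R) : set (R -> R -> R) :=
  [set S | exists phi : R -> R, convex_fun phi /\ S = expectile_score alpha phi].

Definition elem_expectile_score (R : realType) (alpha theta : R) (x y : R) : R :=
  `|(y < x)%R%:R - alpha| *
    (Num.max (y - theta) 0 - Num.max (x - theta) 0 - (y - x) * (theta < x)%R%:R).

From HB Require Import structures.
From mathcomp Require Import all_boot all_order all_algebra.
From mathcomp Require Import all_classical all_reals all_analysis.
From mathcomp Require Import ring lra measurable_realfun.
Import Order.TTheory GRing.Theory Num.Theory.
Import numFieldNormedType.Exports.
Local Open Scope classical_set_scope.
Local Open Scope ring_scope.

Set Implicit Arguments. Unset Strict Implicit. Unset Printing Implicit Defensive.

(* For convex [phi] with left derivative [D], the Bregman divergence
   [phi y - phi x - D x (y - x)] is the integral of the elementary divergences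
   [(y - theta)_+ - (x - theta)_+ - (y - x) 1(theta < x)] against the
   Stieltjes measure [dD(theta)] (Savage's representation).  The weight
   [|1(y < x) - alpha|] does not depend on [theta], so by Tonelli the expected
   score of any member of the class is the [dD]-mixture of the expected
   elementary scores, and the pointwise dominance integrates. *)

Section convex_slopes.
Context {R : realType} (phi : R -> R) (cphi : convex_fun phi).

Lemma convex_fun_between a b c : a < b -> b < c ->
  phi b * (c - a) <= (c - b) * phi a + (b - a) * phi c.
Proof.
move=> ab bc; have ca : 0 < c - a by lra.
set t := (c - b) / (c - a).
have t0 : 0 <= t by rewrite /t divr_ge0 //; lra.
have t1 : t <= 1 by rewrite /t ler_pdivrMr //; lra.
have -> : (c - b) * phi a + (b - a) * phi c
          = (t * phi a + (1 - t) * phi c) * (c - a) by rewrite /t; field; lra.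
have -> : b = t * a + (1 - t) * c by rewrite /t; field; lra.
by apply: ler_wpM2r; [lra | exact: cphi].
Qed.

Lemma convex_slope_le a b c : a < b -> b < c ->
  (phi b - phi a) * (c - b) <= (phi c - phi b) * (b - a).
Proof. by move=> ab bc; have := convex_fun_between ab bc; nra. Qed.

Lemma convex_slope_le_right a b c : a < b -> b < c ->
  (phi c - phi a) * (c - b) <= (phi c - phi b) * (c - a).
Proof. by move=> ab bc; have := convex_fun_between ab bc; nra. Qed.

End convex_slopes.

Section left_deriv_convex.
Context {R : realType} (phi : R -> R) (cphi : convex_fun phi).
Local Notation D := (left_deriv phi).

Let bslope x h := (phi x - phi (x - h)) / h.
Let bslopes x := bslope x @` `]0, +oo[.

Let bslope_le_slope x y h : x < y -> 0 < h ->
  bslope x h <= (phi y - phi x) / (y - x).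
Proof.
move=> xy h0; rewrite /bslope ler_pdivrMr // mulrAC ler_pdivlMr; last lra.
have H := convex_slope_le cphi (a := x - h) (b := x) ltac:(lra) xy.
by rewrite [x - (x - h)](_ : _ = h) in H; [nra | lra].
Qed.

Let bslope_nonincreasing x : {in `]0, +oo[ &, nonincreasing_fun (bslope x)}.
Proof.
move=> h1 h2; rewrite !in_itv /= !andbT => h10 h20.
rewrite le_eqVlt => /predU1P[->//|h12].
rewrite /bslope ler_pdivrMr // mulrAC ler_pdivlMr //.
have H := convex_slope_le_right cphi (a := x - h2) (b := x - h1) (c := x) ltac:(lra) ltac:(lra).
rewrite [x - (x - h1)](_ : _ = h1) in H; last lra.
by rewrite [x - (x - h2)](_ : _ = h2) in H; [nra | lra].
Qed.

Let bslopes_ub x : has_ubound (bslopes x).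
Proof.
exists ((phi (x + 1) - phi x) / (x + 1 - x)) => _ [h /= + <-].
by rewrite in_itv /= andbT => h0; apply: bslope_le_slope => //; lra.
Qed.

Let bslopes_n0 x : bslopes x !=set0.
Proof. by exists (bslope x 1), 1 => //=; rewrite in_itv /= ltr01. Qed.

Lemma left_derivE x : D x = sup (bslopes x).
Proof.
apply: cvg_lim => //.
exact: (nonincreasing_at_right_cvgr (b := +oo%O) _ (bslope_nonincreasing x) (bslopes_ub x)).
Qed.

Lemma left_deriv_ge_slope x h : 0 < h -> phi x - phi (x - h) <= D x * h.
Proof.
move=> h0; rewrite -ler_pdivrMr // left_derivE.
apply: sup_upper_bound; first by split; [exact: bslopes_n0 | exact: bslopes_ub].
by exists h => //=; rewrite in_itv /= h0.
Qed.

Lemma left_deriv_le_slope x y : x < y -> D x * (y - x) <= phi y - phi x.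
Proof.
move=> xy; rewrite -ler_pdivlMr ?subr_gt0 // left_derivE.
apply: ge_sup; first exact: bslopes_n0.
by move=> _ [h /= + <-]; rewrite in_itv /= andbT; apply: bslope_le_slope.
Qed.

Lemma left_deriv_nondecreasing x y : x <= y -> D x <= D y.
Proof.
rewrite le_eqVlt => /predU1P[->//|xy].
have yx0 : 0 < y - x by lra.
have := left_deriv_ge_slope y yx0; rewrite subKr.
have := left_deriv_le_slope xy => h1 h2.
by rewrite -(ler_pM2r yx0); lra.
Qed.

Lemma left_deriv_left_cont x e : 0 < e ->
  exists2 u, u < x & D x - e <= D u.
Proof.
move=> e0; have e20 : 0 < e / 2 by lra.
have [_ [h /= hin <-]] := sup_adherent e20 (conj (bslopes_n0 x) (bslopes_ub x)).
move: hin; rewrite in_itv /= andbT -left_derivE /bslope => h0.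
rewrite ltr_pdivlMr // => hs.
have h20 : 0 < h / 2 by lra.
exists (x - h / 2); first lra.
have := left_deriv_ge_slope (x - h / 2) h20.
have := left_deriv_ge_slope x h20.
rewrite [x - h / 2 - h / 2](_ : _ = x - h); last lra.
by move=> h1 h2; rewrite -(ler_pM2r h20); nra.
Qed.

End left_deriv_convex.

Section left_deriv_measure.
Context {R : realType} (phi : R -> R) (cphi : convex_fun phi).
Local Notation D := (left_deriv phi).

(* [lebesgue_stieltjes_measure] needs a right-continuous function and [D] is
   left-continuous, so we reflect: the variable of integration is [t = - theta]
   and the measure of [`]a, b]] is [D (- a) - D (- b)]. *)
Definition reflected_left_deriv (t : R) := - D (- t).

Lemma reflected_left_deriv_nd : nondecreasing reflected_left_deriv.
Proof.
by move=> s t st; rewrite lerN2 left_deriv_nondecreasing // lerN2.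
Qed.

Lemma reflected_left_deriv_rc : right_continuous reflected_left_deriv.
Proof.
move=> t; apply/cvgrPdist_le => e e0.
have [u ut De] := left_deriv_left_cont cphi (- t) e0.
near=> r.
have tr : t < r by near: r; exact: nbhs_right_gt.
have ru : r <= - u by near: r; apply: nbhs_right_le; lra.
have := left_deriv_nondecreasing cphi (x := u) (y := - r) ltac:(lra).
have := left_deriv_nondecreasing cphi (x := - r) (y := - t) ltac:(lra).
rewrite /reflected_left_deriv ler_norml => h1 h2; apply/andP; split; lra.
Unshelve. all: by end_near. Qed.

HB.instance Definition _ := isCumulative.Build R _ R reflected_left_deriv
  reflected_left_deriv_nd reflected_left_deriv_rc.

Definition left_deriv_measure := lebesgue_stieltjes_measure reflected_left_deriv.

Lemma left_deriv_measure_itv a b : a <= b ->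
  left_deriv_measure `]a, b] = (D (- a) - D (- b))%:E.
Proof.
move=> ab; rewrite /left_deriv_measure /lebesgue_stieltjes_measure /measure_extension.
rewrite measurable_mu_extE /=; last exact: is_ocitv.
rewrite wlength_itv /= lte_fin; case: ltP => [_|ba].
  by rewrite -EFinD /reflected_left_deriv opprK addrC.
have -> : a = b by apply/eqP; rewrite eq_le ab ba.
by rewrite subrr.
Qed.

End left_deriv_measure.

Lemma measurable_fun_ltr_natr {R : realType} d (T : measurableType d) (f g : T -> R) :
  measurable_fun setT f -> measurable_fun setT g ->
  measurable_fun setT (fun z => (f z < g z)%R%:R : R).
Proof.
move=> mf mg; rewrite (_ : (fun z => _) = fun z => if (f z < g z)%R then 1 else 0).
  by apply: measurable_fun_ifT => //; exact: measurable_fun_ltr.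
by apply/funext => z; case: ltP.
Qed.

Section elem_bregman.
Context {R : realType}.

Definition elem_bregman (theta x y : R) :=
  Num.max (y - theta) 0 - Num.max (x - theta) 0 - (y - x) * (theta < x)%R%:R.

Local Notation ind p q t := (\1_(`]p, q]%classic) t : R).

Ltac elem_bregman_cases :=
  rewrite /elem_bregman ?indicE ?mem_setE ?in_itv /= ?maxEle;
  repeat match goal with
  | |- context [ if (?a <= 0)%R then _ else _ ] => case: (leP a 0) => ?
  | |- context [ nat_of_bool ((@Order.lt _ _ ?a ?b) && (@Order.le _ _ ?c ?d)) ] =>
      case: (ltP a b) => ?; case: (leP c d) => ?
  | |- context [ nat_of_bool (@Order.lt _ _ ?a ?b) ] => case: (ltP a b) => ?
  end; rewrite /= ?mulr0 ?mulr1; lra.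

Lemma elem_bregman_ge0 theta x y : 0 <= elem_bregman theta x y.
Proof. elem_bregman_cases. Qed.

Lemma elem_bregmanxx theta x : elem_bregman theta x x = 0.
Proof. elem_bregman_cases. Qed.

Lemma elem_bregman_le x y t : x <= y ->
  elem_bregman (- t) x y <= (y - x) * ind (- y) (- x) t.
Proof. move=> ?; elem_bregman_cases. Qed.

Lemma elem_bregman_split x m y t : x < m -> m < y ->
  elem_bregman (- t) x y =
  elem_bregman (- t) x m + elem_bregman (- t) m y + (y - m) * ind (- m) (- x) t.
Proof. move=> ? ?; elem_bregman_cases. Qed.

Lemma elem_bregman_swap x y t : y < x ->
  elem_bregman (- t) x y + elem_bregman (- t) y x = (x - y) * ind (- x) (- y) t.
Proof. move=> ?; elem_bregman_cases. Qed.

Lemma measurable_elem_bregman d (T : measurableType d) (f g h : T -> R) :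
  measurable_fun setT f -> measurable_fun setT g -> measurable_fun setT h ->
  measurable_fun setT (fun z => elem_bregman (f z) (g z) (h z)).
Proof.
move=> mf mg mh; have mlt := measurable_fun_ltr_natr mf mg.
apply: measurable_funB; first apply: measurable_funB.
- by apply: measurable_maxr => //; exact: measurable_funB.
- by apply: measurable_maxr => //; exact: measurable_funB.
- by apply: measurable_funM => //; exact: measurable_funB.
Qed.

Lemma measurable_elem_bregmanN x y :
  measurable_fun setT (fun t : measurableTypeR R => elem_bregman (- t) x y).
Proof.
by apply: measurable_elem_bregman; [exact: measurable_funN | exact: measurable_cst
  | exact: measurable_cst].
Qed.

End elem_bregman.

Section interval_additive.
Context {R : realType} (F : R -> R -> R) (g : R -> R).
Hypothesis g_nd : forall x y, x <= y -> g x <= g y.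
Hypothesis F_split : forall x m y, x < m -> m < y -> F x y = F x m + F m y.
Hypothesis F_le : forall x y, x <= y -> `|F x y| <= (y - x) * (g y - g x).

Let F_subdiv n x h : 0 < h ->
  `|F x (x + n.+1%:R * h)| <= h * (g (x + n.+1%:R * h) - g x).
Proof.
have F_step z : 0 < h -> `|F z (z + h)| <= h * (g (z + h) - g z).
  move=> h0; have zh : z <= z + h by lra.
  by have := F_le zh; rewrite addrAC subrr add0r.
move=> h0; elim: n => [|n IH]; first by rewrite mul1r F_step.
set m := x + n.+1%:R * h; have -> : x + n.+2%:R * h = m + h.
  by rewrite /m -addn1 natrD; ring.
have xm : x < m by rewrite /m ltrDl mulr_gt0 // ltr0n.
rewrite (F_split xm (_ : m < m + h)) ?ltrDl // (le_trans (ler_normD _ _)) //.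
rewrite [X in _ <= X](_ : _ = h * (g m - g x) + h * (g (m + h) - g m)); last ring.
exact: lerD (F_step m h0).
Qed.

Lemma interval_additive_eq0 x y : x < y -> F x y = 0.
Proof.
move=> xy; set c := (y - x) * (g y - g x).
have c0 : 0 <= c by rewrite mulr_ge0 // subr_ge0 ?g_nd //; exact: ltW.
have F_le_c n : `|F x y| * n.+1%:R <= c.
  have n0 : 0 < n.+1%:R :> R by rewrite ltr0n.
  have hn : 0 < (y - x) / n.+1%:R by apply: divr_gt0; lra.
  have := F_subdiv n x hn; rewrite [x + _](_ : _ = y); last first.
    by field; rewrite addrC natr1 pnatr_eq0.
  by rewrite -ler_pdivlMr // /c mulrAC.
apply/normr0_eq0/eqP; rewrite eq_le normr_ge0 andbT leNgt; apply/negP => F0.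
have := truncnS_gt (c / `|F x y|); rewrite ltr_pdivrMr // mulrC.
by rewrite ltNge F_le_c.
Qed.

End interval_additive.

Lemma ge0_integralD_EFin {R : realType} d (T : measurableType d)
    (mu : {measure set T -> \bar R}) (f g : T -> R) :
  measurable_fun setT f -> measurable_fun setT g ->
  (forall t, 0 <= f t) -> (forall t, 0 <= g t) ->
  (\int[mu]_t (f t + g t)%:E = \int[mu]_t (f t)%:E + \int[mu]_t (g t)%:E)%E.
Proof.
move=> mf mg f0 g0; under eq_integral do rewrite EFinD.
apply: ge0_integralD => //; do ?[by move=> t _; rewrite lee_fin].
- exact/measurable_EFinP.
- exact/measurable_EFinP.
Qed.

Section bregman_mixture.
Context {R : realType} (phi : R -> R) (cphi : convex_fun phi).
Local Notation D := (left_deriv phi).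
Local Notation mu := (left_deriv_measure cphi).
Local Notation ind p q t := (\1_(`]p, q]%classic) t : R).

Definition bregman x y := phi y - phi x - D x * (y - x).

Definition bregman_mixture x y := (\int[mu]_t (elem_bregman (- t) x y)%:E)%E.

Let integral_indic_itv c p q : 0 <= c -> p <= q ->
  (\int[mu]_t (c * ind p q t)%:E = (c * (D (- p) - D (- q)))%:E)%E.
Proof.
move=> c0 pq; under eq_integral do rewrite EFinM.
rewrite ge0_integralZl_EFin //; last first.
  by apply/measurable_EFinP; apply: measurable_indic; exact: measurable_itv.
rewrite integral_indic ?setIT //= -[X in (_ * X)%E]/(mu `]p, q]%classic).
by rewrite left_deriv_measure_itv // -EFinM.
Qed.

Lemma bregman_mixture_ge0 x y : (0 <= bregman_mixture x y)%E.
Proof. by apply: integral_ge0 => t _; rewrite lee_fin elem_bregman_ge0. Qed.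

Lemma bregman_mixturexx x : bregman_mixture x x = 0%E.
Proof.
by rewrite /bregman_mixture (eq_integral (fun _ => 0%E)) ?integral0 // => t _;
  rewrite elem_bregmanxx.
Qed.

Lemma bregman_mixture_le x y : x <= y ->
  (bregman_mixture x y <= ((y - x) * (D y - D x))%:E)%E.
Proof.
move=> xy; apply: (@le_trans _ _ (\int[mu]_t ((y - x) * ind (- y) (- x) t)%:E)%E).
  apply: ge0_le_integral => //.
  - by move=> t _; rewrite lee_fin elem_bregman_ge0.
  - by apply/measurable_EFinP; exact: measurable_elem_bregmanN.
  - apply/measurable_EFinP; apply: measurable_funM; first exact: measurable_cst.
    by apply: measurable_indic; exact: measurable_itv.
  - by move=> t _; rewrite lee_fin elem_bregman_le.
by rewrite integral_indic_itv ?opprK // ?subr_ge0 // lerN2.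
Qed.

Lemma bregman_mixture_split x m y : x < m -> m < y ->
  bregman_mixture x y =
  (bregman_mixture x m + bregman_mixture m y + ((y - m) * (D m - D x))%:E)%E.
Proof.
move=> xm my; rewrite /bregman_mixture.
under eq_integral => t _ do rewrite (elem_bregman_split t xm my).
rewrite ge0_integralD_EFin //; last 4 first.
- by apply: measurable_funD; exact: measurable_elem_bregmanN.
- apply: measurable_funM; first exact: measurable_cst.
  by apply: measurable_indic; exact: measurable_itv.
- by move=> t; rewrite addr_ge0 ?elem_bregman_ge0.
- by move=> t; rewrite mulr_ge0 ?indicE // subr_ge0 ltW.
rewrite ge0_integralD_EFin //; last 4 first.
- exact: measurable_elem_bregmanN.
- exact: measurable_elem_bregmanN.
- by move=> t; exact: elem_bregman_ge0.
- by move=> t; exact: elem_bregman_ge0.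
by rewrite integral_indic_itv ?opprK ?subr_ge0 ?lerN2 //; exact: ltW.
Qed.

Lemma bregman_mixture_swap x y : y < x ->
  (bregman_mixture x y + bregman_mixture y x = ((x - y) * (D x - D y))%:E)%E.
Proof.
move=> yx; rewrite /bregman_mixture -ge0_integralD_EFin //; last 4 first.
- exact: measurable_elem_bregmanN.
- exact: measurable_elem_bregmanN.
- by move=> t; exact: elem_bregman_ge0.
- by move=> t; exact: elem_bregman_ge0.
under eq_integral => t _ do rewrite (elem_bregman_swap t yx).
by rewrite integral_indic_itv ?opprK ?subr_ge0 ?lerN2 //; exact: ltW.
Qed.

Lemma bregman_ge0 x y : x <= y -> 0 <= bregman x y.
Proof.
rewrite le_eqVlt => /predU1P[->|xy]; first by rewrite /bregman; lra.
by have := left_deriv_le_slope cphi xy; rewrite /bregman; lra.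
Qed.

Lemma bregman_le x y : x <= y -> bregman x y <= (y - x) * (D y - D x).
Proof.
rewrite le_eqVlt => /predU1P[->|xy]; first by rewrite /bregman; lra.
have yx0 : 0 < y - x by lra.
by have := left_deriv_ge_slope cphi y yx0; rewrite subKr /bregman; nra.
Qed.

Let bregman_mixture_fin x y : x <= y -> bregman_mixture x y \is a fin_num.
Proof.
move=> xy; rewrite ge0_fin_numE ?bregman_mixture_ge0 //.
exact: le_lt_trans (bregman_mixture_le xy) (ltry _).
Qed.

(* Both sides split in the same way over [x < m < y] and lie in
   [[0, (y - x) (D y - D x)]] for [x <= y], so their difference is additive and
   dominated, hence zero; no Stieltjes integral is ever computed. *)
Lemma bregman_mixtureE x y : bregman_mixture x y = (bregman x y)%:E.
Proof.
pose err x y := fine (bregman_mixture x y) - bregman x y.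
have err0 : forall x y, x < y -> err x y = 0.
  apply: (interval_additive_eq0 (g := D)).
  - exact: left_deriv_nondecreasing.
  - move=> {}x m {}y xm my; rewrite /err (bregman_mixture_split xm my).
    have := bregman_mixture_fin (ltW xm); have := bregman_mixture_fin (ltW my).
    move: (bregman_mixture x m) (bregman_mixture m y) => [a| |] // [b| |] // _ _.
    by rewrite /= /bregman; ring.
  - move=> {}x {}y xy; have := bregman_mixture_le xy; have := bregman_mixture_ge0 x y.
    rewrite -(fineK (bregman_mixture_fin xy)) !lee_fin => h0 h1.
    by have := bregman_ge0 xy; have := bregman_le xy; rewrite /err ler_norml; lra.
have lt_case x' y' : x' < y' -> bregman_mixture x' y' = (bregman x' y')%:E.
  move=> xy; rewrite -(fineK (bregman_mixture_fin (ltW xy))); congr (_%:E).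
  by have := err0 _ _ xy; rewrite /err; lra.
have [xy|yx|<-] := ltgtP x y; first exact: lt_case.
- have := bregman_mixture_swap yx; rewrite (lt_case _ _ yx).
  have := bregman_mixture_ge0 x y; case: (bregman_mixture x y) => // r _.
  by rewrite -EFinD => -[]; rewrite /bregman => ?; congr (_%:E); nra.
- by rewrite bregman_mixturexx /bregman; congr (_%:E); ring.
Qed.

End bregman_mixture.

Section expectile_mixture.
Context d (Omega : measurableType d) (R : realType) (Q : probability Omega R).
Context (alpha : R) (X Y : Omega -> R).
Hypotheses (mX : measurable_fun setT X) (mY : measurable_fun setT Y).

Let weight w := `|(Y w < X w)%R%:R - alpha|.

Let measurable_weight : measurable_fun setT weight.
Proof.
apply: measurableT_comp; first exact: normr_measurable.
apply: measurable_funB; last exact: measurable_cst.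
exact: measurable_fun_ltr_natr.
Qed.

Let elem_score_prod (z : Omega * measurableTypeR R) :=
  (weight z.1 * elem_bregman (- z.2) (X z.1) (Y z.1))%:E.

Let measurable_elem_score_prod : measurable_fun setT elem_score_prod.
Proof.
apply/measurable_EFinP; apply: measurable_funM.
  exact: measurableT_comp measurable_weight measurable_fst.
apply: measurable_elem_bregman.
- by apply: measurable_funN; exact: measurable_snd.
- exact: measurableT_comp mX measurable_fst.
- exact: measurableT_comp mY measurable_fst.
Qed.

Let elem_score_prod_ge0 z : (0 <= elem_score_prod z)%E.
Proof. by rewrite lee_fin mulr_ge0 ?normr_ge0 ?elem_bregman_ge0. Qed.

Lemma elem_expectile_risk_ge0 theta :
  (0 <= \int[Q]_w (elem_expectile_score alpha theta (X w) (Y w))%:E)%E.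
Proof.
by apply: integral_ge0 => w _; rewrite lee_fin mulr_ge0 ?normr_ge0 ?elem_bregman_ge0.
Qed.

Lemma measurable_elem_expectile_risk :
  measurable_fun setT (fun t : measurableTypeR R =>
    \int[Q]_w (elem_expectile_score alpha (- t) (X w) (Y w))%:E)%E.
Proof.
exact: measurable_fun_fubini_tonelli_G measurable_elem_score_prod elem_score_prod_ge0.
Qed.

Lemma expectile_risk_mixture (phi : R -> R) (cphi : convex_fun phi) :
  (\int[Q]_w (expectile_score alpha phi (X w) (Y w))%:E =
   \int[left_deriv_measure cphi]_t
     \int[Q]_w (elem_expectile_score alpha (- t) (X w) (Y w))%:E)%E.
Proof.
transitivity (\int[Q]_w \int[left_deriv_measure cphi]_t elem_score_prod (w, t))%E;
  last exact: fubini_tonelli.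
apply: eq_integral => w _; rewrite /elem_score_prod /=.
under eq_integral do rewrite EFinM.
rewrite ge0_integralZl_EFin ?normr_ge0 //; last 2 first.
- by move=> t _; rewrite lee_fin elem_bregman_ge0.
- by apply/measurable_EFinP; exact: measurable_elem_bregmanN.
by have := bregman_mixtureE cphi (X w) (Y w); rewrite /bregman_mixture => ->.
Qed.

End expectile_mixture.

Unset Implicit Arguments.
Local Open Scope ereal_scope.

Theorem mainTheorem7 (d : measure_display) (Omega : measurableType d)
  (R : realType) (Q : probability Omega R) (alpha : R)
  (X1 X2 Y : Omega -> R) :
  (0 < alpha < 1)%R ->
  measurable_fun setT X1 -> measurable_fun setT X2 -> measurable_fun setT Y ->
  (forall theta : R,
     \int[Q]_w (elem_expectile_score alpha theta (X1 w) (Y w))%:E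
     <= \int[Q]_w (elem_expectile_score alpha theta (X2 w) (Y w))%:E) ->
  forall S : R -> R -> R, expectile_scores alpha S ->
     \int[Q]_w (S (X1 w) (Y w))%:E <= \int[Q]_w (S (X2 w) (Y w))%:E.
Proof.
move=> _ mX1 mX2 mY elem_le S [phi [cphi ->]].
rewrite !expectile_risk_mixture //.
apply: ge0_le_integral.
- exact: measurableT.
- by move=> t _; exact: elem_expectile_risk_ge0.
- exact: measurable_elem_expectile_risk.
- exact: measurable_elem_expectile_risk.
- by move=> t _; exact: elem_le.
Qed.
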